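(* Let $p$ be a prime, $R$ an $F$-pure ring of characteristic $p$, and $f\in R$ a non-zero non-unit. Let $d\ge1$ be an integer and $\alpha\in[0,1]$ with $(p^d-1)\alpha\in\mathbb{N}$. If the inclusion $R\cdot f^{\langle\alpha\rangle_d}\subseteq R^{1/p^d}$ splits over $R$, then $\alpha\le\operatorname{fpt}(f)$.
   Context: A ring $R$ of characteristic $p$ is $F$-pure if $R\subseteq R^{1/p}$ splits as a map of $R$-modules. Roots and splitting. $R^{1/p^e}$ is the ring of formal $p^e$-th roots of elements of $R$, containing $R$ via $r\mapsto(r^{p^e})^{1/p^e}$. For $a\in\mathbb{N}$, $f^{a/p^e}:=(f^a)^{1/p^e}$. The inclusion $R\cdot t\subseteq R^{1/p^e}$ splits if some $R$-linear $\theta:R^{1/p^e}\to R$ has $\theta(t)=1$. $F$-pure threshold. $(R,f^\lambda)$ is $F$-pure if $R\cdot f^{\lfloor (p^e-1)\lambda\rfloor/p^e}\subseteq R^{1/p^e}$ splits for all $e\ge1$. $\operatorname{fpt}(f)$ is the supremum of $\lambda\ge0$ with $(R,f^\lambda)$ $F$-pure. Truncations. For $\alpha\in(0,1]$ with non-terminating base $p$ expansion $\alpha=\sum_{e\ge1}a_e/p^e$ (digits $0\le a_e\le p-1$, not all eventually zero), $\langle\alpha\rangle_e:=\sum_{i=1}^e a_i/p^i\in\frac1{p^e}\mathbb{N}$, so that $f^{\langle\alpha\rangle_e}\in R^{1/p^e}$. By convention $\langle0\rangle_e=0$. *)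

From HB Require Import structures.
From mathcomp Require Import all_boot all_order all_algebra.
From mathcomp Require Import all_classical all_reals all_analysis.
From mathcomp Require Import Rstruct Rstruct_topology.
From Stdlib Require Import ClassicalEpsilon.
Set Implicit Arguments. Unset Strict Implicit. Unset Printing Implicit Defensive.
Import Order.TTheory GRing.Theory Num.Theory.
Local Open Scope ring_scope.
Local Open Scope classical_set_scope.
Local Open Scope ring_scope.

Notation real := Rdefinitions.R.

(* R^{1/q} (q = p^e) is identified with the ring A itself via x^{1/q} <-> x;
   its additive structure is that of A and the R-module structure is
   r . x^{1/q} = (r^q x)^{1/q}.  An R-linear map theta : R^{1/q} -> R is thus
   an additive map theta : A -> A with theta (r^q x) = r theta(x).
   [splits_root A q t] : the inclusion R . t^{1/q} ⊆ R^{1/q} splits, i.e.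
   some R-linear theta : R^{1/q} -> R has theta(t^{1/q}) = 1. *)
Definition splits_root (A : comNzRingType) (q : nat) (t : A) : Prop :=
  exists theta : A -> A,
    [/\ (forall x y, theta (x + y) = theta x + theta y),
        (forall r x, theta (r ^+ q * x) = r * theta x) &
        theta t = 1].

Arguments splits_root : clear implicits.

Definition Fpure (A : comNzRingType) (p : nat) : Prop := splits_root A p 1.

(* (R, f^lambda) is F-pure: for all e >= 1, R . f^{floor((p^e-1) lambda)/p^e}
   ⊆ R^{1/p^e} splits (lambda >= 0, so truncn is the floor). *)
Definition pair_Fpure (A : comNzRingType) (p : nat) (f : A) (lambda : real) : Prop :=
  forall e : nat, (0 < e)%N ->
    splits_root A (p ^ e) (f ^+ Num.truncn ((p ^ e - 1)%:R * lambda)).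

Arguments pair_Fpure : clear implicits.
Definition fpt (A : comNzRingType) (p : nat) (f : A) : \bar real :=
  ereal_sup [set (lambda%:E)%E | lambda in
               [set lambda : real | 0 <= lambda /\ pair_Fpure A p f lambda]].

(* a is a non-terminating base-p expansion of alpha: alpha = sum_{e>=1} a_e/p^e,
   digits 0 <= a_e <= p-1, not all eventually zero (a 0 is irrelevant). *)
Definition nonterm_expansion (p : nat) (alpha : real) (a : nat -> nat) : Prop :=
  [/\ (forall i, (a i < p)%N),
      (forall N, exists i, (N <= i)%N /\ a i <> 0%N) &
      ((fun n : nat => \sum_(1 <= i < n.+1) (a i)%:R / (p%:R ^+ i : real))
         @ \oo --> alpha)].

Definition digits (p : nat) (alpha : real) : nat -> nat :=
  epsilon (inhabits (fun _ => 0%N)) (nonterm_expansion p alpha).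

(* <alpha>_e = trunc_num p alpha e / p^e, so f^{<alpha>_e} = (f^{trunc_num})^{1/p^e};
   convention <0>_e = 0. *)
Definition trunc_num (p : nat) (alpha : real) (e : nat) : nat :=
  if alpha == 0 then 0%N
  else \sum_(1 <= i < e.+1) (digits p alpha i * p ^ (e - i))%N.
Arguments fpt : clear implicits.
Arguments Fpure : clear implicits.

From HB Require Import structures.
From mathcomp Require Import all_boot all_order all_algebra.
From mathcomp Require Import all_classical all_reals all_analysis.
From mathcomp Require Import Rstruct Rstruct_topology.
From mathcomp Require Import lra ring zify.
From Stdlib Require Import ClassicalEpsilon.
Set Implicit Arguments. Unset Strict Implicit. Unset Printing Implicit Defensive.
Import Order.TTheory GRing.Theory Num.Theory.
Local Open Scope classical_set_scope.
Local Open Scope ring_scope.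

(* Since (p^d - 1)alpha = k is an integer, alpha = k / (p^d - 1) is the base p^d
   number 0.kkk..., and the bound alpha <= <alpha>_d + p^-d valid for non-terminating
   expansions gives k <= p^d <alpha>_d, so f^k splits at level p^d.  Composing e
   copies of this splitting, f^(k (1 + p^d + ... + p^(d(e-1)))) = f^((p^(de) - 1) alpha)
   splits at level p^(de); by Frobenius descent to level p^e it suffices that
   floor((p^e - 1) alpha) p^(de - e) <= (p^(de) - 1) alpha, which is clear. *)

Definition expansion_sum (p : nat) (a : nat -> nat) (n : nat) : real :=
  \sum_(1 <= i < n.+1) (a i)%:R / p%:R ^+ i.

Lemma expansion_sumS p a n :
  expansion_sum p a n.+1 = expansion_sum p a n + (a n.+1)%:R / p%:R ^+ n.+1.
Proof. by rewrite /expansion_sum big_nat_recr. Qed.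

Section DigitBound.

Variables (p : nat) (a : nat -> nat).
Hypotheses (p_gt1 : (1 < p)%N) (a_lt : forall i, (a i < p)%N).

Let p_gt0 : (0 : real) < p%:R. Proof. by rewrite ltr0n; lia. Qed.

Lemma expansion_sum_le m n : (m <= n)%N ->
  expansion_sum p a n <= expansion_sum p a m + p%:R ^- m - p%:R ^- n.
Proof.
move=> /subnKC <-; elim: (n - m)%N => [|j IH]; first by rewrite addn0; lra.
rewrite addnS expansion_sumS.
have pj_gt0 : (0 : real) < p%:R ^+ (m + j).+1 by rewrite exprn_gt0.
have digit_le : (a (m + j).+1)%:R / p%:R ^+ (m + j).+1 <= (p%:R - 1) / p%:R ^+ (m + j).+1 :> real.
  by rewrite ler_pM2r ?invr_gt0 // lerBrDr natr1 ler_nat.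
have prev : p%:R ^- (m + j) = p%:R / p%:R ^+ (m + j).+1 :> real.
  by rewrite exprS invfM mulrA divff ?mul1r // gt_eqF.
move: IH digit_le; rewrite prev mulrBl mul1r; lra.
Qed.

Lemma expansion_limit_le al : expansion_sum p a @ \oo --> al ->
  forall m, al <= expansion_sum p a m + p%:R ^- m.
Proof.
move=> a_cvg m; apply: (cvgr_to_le a_cvg); exists m => // n /= mn.
apply: le_trans (expansion_sum_le mn) _.
by rewrite lerBlDr lerDl invr_ge0 exprn_ge0 // ltW.
Qed.

End DigitBound.

Definition approx_digits (p : nat) (c : nat -> nat) (i : nat) : nat :=
  (c i - p * c i.-1)%N.

Section ApproxDigits.

Variables (p : nat) (al : real) (c : nat -> nat).
Hypotheses (p_gt1 : (1 < p)%N) (al_le1 : al <= 1).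
(* c n = ceil(p^n al) - 1: approximating al strictly from below is what makes the
   resulting expansion non-terminating. *)
Hypothesis cP : forall n, (c n)%:R < p%:R ^+ n * al <= (c n).+1%:R.

Let p_gt0 : (0 : real) < p%:R. Proof. by rewrite ltr0n; lia. Qed.
Let pn_gt0 n : (0 : real) < p%:R ^+ n. Proof. by rewrite exprn_gt0. Qed.

Lemma approx0 : c 0 = 0%N.
Proof.
have /andP[c0_lt _] := cP 0; rewrite expr0 mul1r in c0_lt.
have : (c 0)%:R < 1 :> real := lt_le_trans c0_lt al_le1.
by rewrite ltrn1; case: (c 0).
Qed.

Lemma approx_le n : (p * c n <= c n.+1)%N.
Proof.
have /andP[cn_lt _] := cP n; have /andP[_ cSn_ge] := cP n.+1.
rewrite -ltnS -(ltr_nat real) natrM; apply: lt_le_trans cSn_ge.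
by rewrite exprS -mulrA ltr_pM2l.
Qed.

Lemma approx_lt n : (c n.+1 < p * (c n).+1)%N.
Proof.
have /andP[cSn_lt _] := cP n.+1; have /andP[_ cn_ge] := cP n.
rewrite -(ltr_nat real) natrM; apply: lt_le_trans cSn_lt _.
by rewrite exprS -mulrA ler_pM2l.
Qed.

Lemma approx_digits_lt i : (approx_digits p c i < p)%N.
Proof.
case: i => [|i]; rewrite /approx_digits /=; first by rewrite approx0; lia.
by have := approx_lt i; rewrite mulnS; lia.
Qed.

Lemma expansion_sum_approx n :
  expansion_sum p (approx_digits p c) n = (c n)%:R / p%:R ^+ n.
Proof.
elim: n => [|n IH]; first by rewrite /expansion_sum big_geq // approx0 mul0r.
rewrite expansion_sumS IH /approx_digits /= natrB ?approx_le // natrM exprS.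
by field; rewrite !gt_eqF.
Qed.

Lemma approx_digits_cvg : expansion_sum p (approx_digits p c) @ \oo --> al.
Proof.
apply: (@squeeze_cvgr _ \oo _ _ (fun n => al - p%:R^-1 ^+ n) (fun=> al)
  (expansion_sum p (approx_digits p c))); last first.
- exact: cvg_cst.
- rewrite -[X in _ --> X]subr0; apply: (@cvgB _ real^o); first exact: cvg_cst.
  by apply: cvg_expr; rewrite ger0_norm ?invr_ge0 ?ltW // invf_lt1 // ltr1n.
apply: nearW => n; rewrite expansion_sum_approx exprVn.
have /andP[cn_lt cn_ge] := cP n; apply/andP; split.
- rewrite ler_pdivlMr // mulrBl mulVf ?gt_eqF // [al * _]mulrC.
  by move: cn_ge; rewrite -natr1; lra.
- by rewrite ler_pdivrMr // mulrC ltW.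
Qed.

Lemma approx_digits_nonterm N :
  exists i, (N <= i)%N /\ approx_digits p c i <> 0%N.
Proof.
apply: contrapT => no_digit.
have digit0 i : (N <= i)%N -> approx_digits p c i = 0%N.
  move=> Ni; case: (eqVneq (approx_digits p c i) 0%N) => // nz.
  by case: no_digit; exists i; split => //; apply/eqP.
have sum_const j : expansion_sum p (approx_digits p c) (N + j) =
                   expansion_sum p (approx_digits p c) N.
  elim: j => [|j IH]; first by rewrite addn0.
  by rewrite addnS expansion_sumS IH digit0 ?mul0r ?addr0 //; lia.
have : al <= expansion_sum p (approx_digits p c) N.
  apply: (cvgr_to_le approx_digits_cvg); exists N => // n /= Nn.
  by rewrite -(subnKC Nn) sum_const.
rewrite expansion_sum_approx ler_pdivlMr // mulrC.
by have /andP[cN_lt _] := cP N; rewrite leNgt cN_lt.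
Qed.

Lemma approx_nonterm_expansion : nonterm_expansion p al (approx_digits p c).
Proof.
split; [exact: approx_digits_lt | exact: approx_digits_nonterm |].
exact: approx_digits_cvg.
Qed.

End ApproxDigits.

Lemma exists_nat_lt_le (x : real) : 0 < x -> exists m : nat, m%:R < x <= m.+1%:R.
Proof.
move=> x_gt0; have /andP[tr_le tr_gt] := truncn_itv (ltW x_gt0).
have [tr_eq | tr_neq] := eqVneq (Num.truncn x)%:R x; last first.
  by exists (Num.truncn x); rewrite lt_neqAle tr_neq tr_le ltW.
have tr_gt0 : (0 < Num.truncn x)%N by rewrite -(ltr_nat real) tr_eq.
exists (Num.truncn x).-1; rewrite prednK // tr_eq lexx andbT.
by rewrite -[X in _ < X]tr_eq ltr_nat ltn_predL.
Qed.

Lemma exists_nonterm_expansion p (al : real) : (1 < p)%N -> 0 < al <= 1 ->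
  exists a, nonterm_expansion p al a.
Proof.
move=> p_gt1 /andP[al_gt0 al_le1].
have p_gt0 : (0 : real) < p%:R by rewrite ltr0n; lia.
have approx n := exists_nat_lt_le (mulr_gt0 (exprn_gt0 n p_gt0) al_gt0).
exists (approx_digits p (fun n => xchoose (approx n))).
exact: approx_nonterm_expansion (fun n => xchooseP (approx n)).
Qed.

Lemma digitsP p (al : real) : (1 < p)%N -> 0 < al <= 1 ->
  nonterm_expansion p al (digits p al).
Proof.
move=> p_gt1 al01; apply: epsilon_spec.
exact: exists_nonterm_expansion.
Qed.

Lemma natr_digit_sum p a d : (0 < p)%N ->
  (\sum_(1 <= i < d.+1) (a i * p ^ (d - i))%N)%:R = p%:R ^+ d * expansion_sum p a d :> real.
Proof.
move=> p_gt0; rewrite natr_sum /expansion_sum mulr_sumr; apply: eq_big_nat => i /andP[_ i_le].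
have p_neq0 : p%:R != 0 :> real by rewrite pnatr_eq0 -lt0n.
have p_unit : p%:R \is a @GRing.unit real by rewrite unitfE.
rewrite natrM natrX (exprB i_le p_unit) !exprS.
by field; rewrite expf_neq0 p_neq0.
Qed.

Lemma trunc_num_ge p (al : real) d : (1 < p)%N -> 0 <= al <= 1 ->
  p%:R ^+ d * al <= (trunc_num p al d)%:R + 1.
Proof.
move=> p_gt1 /andP[al_ge0 al_le1]; rewrite /trunc_num.
have [-> | al_neq0] := eqVneq al 0; first by rewrite mulr0 add0r ler01.
have al01 : 0 < al <= 1 by rewrite lt_neqAle eq_sym al_neq0 al_ge0 al_le1.
have pd_gt0 : (0 : real) < p%:R ^+ d by rewrite exprn_gt0 // ltr0n; lia.
rewrite natr_digit_sum ?(ltnW p_gt1) //.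
have [digit_lt _ digit_cvg] := digitsP p_gt1 al01.
have := expansion_limit_le p_gt1 digit_lt digit_cvg d.
by rewrite -(ler_pM2l pd_gt0) mulrDr mulfV ?gt_eqF.
Qed.

Lemma le_trunc_num p (al : real) d k : (1 < p)%N -> 0 <= al <= 1 ->
  (p ^ d - 1)%:R * al = k%:R -> (k <= trunc_num p al d)%N.
Proof.
move=> p_gt1 al01 k_eq.
have [al0 | al_neq0] := eqVneq al 0.
  by move: k_eq; rewrite al0 mulr0 => /esym/eqP; rewrite pnatr_eq0 => /eqP ->.
have al_gt0 : 0 < al by rewrite lt_neqAle eq_sym al_neq0; case/andP: al01.
have := trunc_num_ge d p_gt1 al01.
rewrite -ltnS -(ltr_nat real) -natr1 -k_eq natrB ?natrX ?expn_gt0 ?(ltnW p_gt1) //.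
rewrite mulrBl mul1r; lra.
Qed.

Lemma truncn_mul_expn_le p d e k (al : real) : (1 < p)%N -> (0 < d)%N -> 0 <= al ->
  (p ^ d - 1)%:R * al = k%:R ->
  (Num.truncn ((p ^ e - 1)%:R * al) * p ^ (d * e - e) <= k * \sum_(i < e) (p ^ d) ^ i)%N.
Proof.
move=> p_gt1 d_gt0 al_ge0 k_eq.
have geom : (p ^ d - 1)%:R * (\sum_(i < e) (p ^ d) ^ i)%:R = (p ^ (d * e) - 1)%:R :> real.
  by rewrite -natrM !subn1 expnM (predn_exp (p ^ d) e).
have tr_le : (Num.truncn ((p ^ e - 1)%:R * al))%:R <= (p ^ e - 1)%:R * al.
  by rewrite truncn_le mulr_ge0 ?ler0n.
have pe_mul : (p ^ e * p ^ (d * e - e) = p ^ (d * e))%N by rewrite -expnD subnKC ?leq_pmull.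
have m_ge1 : 1 <= (p ^ (d * e - e))%:R :> real by rewrite ler1n expn_gt0; lia.
rewrite -(ler_nat real) !natrM -k_eq mulrAC geom.
move: tr_le; rewrite !natrB ?expn_gt0 -?pe_mul ?natrM; try lia.
nra.
Qed.

Section Splitting.

Variable A : comNzRingType.

Lemma splits_root_mull (q : nat) (g t : A) :
  splits_root A q (g * t) -> splits_root A q t.
Proof.
move=> [th [thD thL th1]].
exists (fun x => th (g * x)); split=> //.
- by move=> x y; rewrite mulrDr thD.
- by move=> r x; rewrite mulrCA thL.
Qed.

Lemma splits_root_pow_le (q a b : nat) (t : A) : (b <= a)%N ->
  splits_root A q (t ^+ a) -> splits_root A q (t ^+ b).
Proof. by move=> ba; rewrite -(subnK ba) exprD; apply: splits_root_mull. Qed.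

Lemma splits_root_comp (q r : nat) (s t : A) :
  splits_root A q s -> splits_root A r t -> splits_root A (q * r) (s ^+ r * t).
Proof.
move=> [th [thD thL th1]] [th' [th'D th'L th'1]].
exists (fun x => th (th' x)); split.
- by move=> x y; rewrite th'D thD.
- by move=> u x; rewrite exprM th'L thL.
- by rewrite th'L th'1 mulr1.
Qed.

Lemma splits_root_iter (q : nat) (t : A) n :
  splits_root A q t -> splits_root A (q ^ n) (t ^+ (\sum_(i < n) q ^ i)).
Proof.
move=> ht; elim: n => [|n IH].
  by rewrite big_ord0; exists id; split.
rewrite expnS big_ord_recr /= addnC exprD.
exact: splits_root_comp.
Qed.

Lemma splits_root_frobenius (q r : nat) (t : A) : [pchar A].-nat r ->
  splits_root A (q * r) (t ^+ r) -> splits_root A q t.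
Proof.
move=> r_char [th [thD thL th1]].
exists (fun x => th (x ^+ r)); split=> //.
- by move=> x y; rewrite exprDn_pchar // thD.
- by move=> u x; rewrite exprMn -exprM thL.
Qed.

Lemma splits_root_descend (p E e a b : nat) (f : A) :
  p \in [pchar A] -> (e <= E)%N -> (b * p ^ (E - e) <= a)%N ->
  splits_root A (p ^ E) (f ^+ a) -> splits_root A (p ^ e) (f ^+ b).
Proof.
move=> p_char eE ba /(splits_root_pow_le ba).
have -> : (p ^ E = p ^ e * p ^ (E - e))%N by rewrite -expnD subnKC.
rewrite exprM; apply: splits_root_frobenius.
by rewrite pnatX pnatE ?p_char // (pcharf_prime p_char).
Qed.

End Splitting.

Lemma pair_Fpure_of_splits_root (A : comNzRingType) p (f : A) d k (al : real) :
  p \in [pchar A] -> (0 < d)%N -> 0 <= al -> (p ^ d - 1)%:R * al = k%:R ->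
  splits_root A (p ^ d) (f ^+ k) -> pair_Fpure A p f al.
Proof.
move=> p_char d_gt0 al_ge0 k_eq f_split e _.
have p_gt1 := prime_gt1 (pcharf_prime p_char).
have := splits_root_iter e f_split; rewrite -exprM -expnM.
apply: splits_root_descend p_char (leq_pmull _ d_gt0) _.
exact: truncn_mul_expn_le.
Qed.

Theorem mainTheorem7 (p : nat) (A : comUnitRingType) (f : A) (d : nat) (alpha : real) :
  prime p -> p \in [pchar A] -> Fpure A p ->
  f != 0 -> f \isn't a GRing.unit ->
  (1 <= d)%N -> 0 <= alpha <= 1 ->
  (exists k : nat, (p ^ d - 1)%:R * alpha = k%:R) ->
  splits_root A (p ^ d) (f ^+ trunc_num p alpha d) ->
  (alpha%:E <= fpt A p f)%E.
Proof.
move=> p_prime p_char _ _ _ d_gt0 alpha01 [k k_eq] f_split.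
have alpha_ge0 : 0 <= alpha by case/andP: alpha01.
have k_le := le_trunc_num (prime_gt1 p_prime) alpha01 k_eq.
apply: ereal_sup_ubound; exists alpha => //; split => //.
exact: pair_Fpure_of_splits_root p_char d_gt0 alpha_ge0 k_eq (splits_root_pow_le k_le f_split).
Qed.
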